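(* Let $\beta=(\pi_\ell)_{\ell=1}^L$ be a chainable architecture with $L\ge 2$. Then $$\mathcal{B}^\beta=\bigcap_{\ell=1}^{L-1}\mathcal{B}^{\beta_\ell}=\Sigma^{\pi_1*\cdots*\pi_L}\cap\bigcap_{\ell=1}^{L-1}\mathcal{M}^{\beta_\ell}.$$
   Context: A pattern is a tuple $\pi=(a,b,c,d)$ of positive integers; $\mathbf{S}_\pi:=\mathbf{I}_a\otimes\mathbf{1}_{b\times c}\otimes\mathbf{I}_d\in\{0,1\}^{abd\times acd}$. A $\pi$-factor is a complex $abd\times acd$ matrix with support contained in that of $\mathbf{S}_\pi$; $\Sigma^\pi$ is the set of $\pi$-factors. Patterns $\pi_1=(a_1,b_1,c_1,d_1),\pi_2=(a_2,b_2,c_2,d_2)$ are chainable if $a_1c_1/a_2=b_2d_2/d_1=:r(\pi_1,\pi_2)$ is an integer, $a_1\mid a_2$, $d_2\mid d_1$; then $\pi_1*\pi_2:=(a_1,b_1d_1/d_2,a_2c_2/a_1,d_2)$. An architecture $\beta=(\pi_\ell)_{\ell=1}^L$ is a sequence of patterns with $a_\ell c_\ell d_\ell=a_{\ell+1}b_{\ell+1}d_{\ell+1}$; it is chainable if all consecutive pairs are chainable. For chainable $\beta$, $\pi_p*\cdots*\pi_q$ denotes the iterated product (well defined). $\mathcal{B}^\beta:=\{\mathbf{X}_1\cdots\mathbf{X}_L:\mathbf{X}_\ell\in\Sigma^{\pi_\ell}\}$. For $\ell\in\{1,\dots,L-1\}$, $\beta_\ell:=(\pi_1*\cdots*\pi_\ell,\;\pi_{\ell+1}*\cdots*\pi_L)$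 (a two-pattern architecture). For binary $\mathbf{L}\in\{0,1\}^{m\times r},\mathbf{R}\in\{0,1\}^{r\times n}$ let $\mathbf{U}_i:=\mathbf{L}[:,i]\mathbf{R}[i,:]$, let $\mathcal{P}(\mathbf{L},\mathbf{R})$ be the partition of $\{1,\dots,r\}$ into classes of $i\sim j\iff\mathbf{U}_i=\mathbf{U}_j$, and for a class $P$ let $R_P\times C_P$ be the support of $\mathbf{U}_i$, $i\in P$. For a chainable pair $\alpha=(\pi,\pi')$, $\mathcal{M}^\alpha$ is the set of complex matrices $\mathbf{A}$ of the size of matrices in $\mathcal{B}^\alpha$ such that $\operatorname{rank}(\mathbf{A}[R_P,C_P])\le r(\pi,\pi')$ for every $P\in\mathcal{P}(\mathbf{S}_\pi,\mathbf{S}_{\pi'})$. *)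

From mathcomp Require Import all_boot all_algebra.
From mathcomp Require Import complex.
From mathcomp Require Import Rstruct.

Set Implicit Arguments.
Unset Strict Implicit.
Unset Printing Implicit Defensive.

Import GRing.Theory.
Local Open Scope ring_scope.

Definition CC := complex Rdefinitions.R.

Record pattern := Pattern { pa : nat; pb : nat; pc : nat; pd : nat }.

Definition pattern_pos (p : pattern) : bool :=
  [&& 0 < pa p, 0 < pb p, 0 < pc p & 0 < pd p]%N.

Definition prows (p : pattern) : nat := (pa p * pb p * pd p)%N.
Definition pcols (p : pattern) : nat := (pa p * pc p * pd p)%N.

(* Entry (i,j) (0-based, Kronecker order) of S_pi = I_a (x) 1_{bxc} (x) I_d:
   with i = i1*(b d) + i2*d + i3 and j = j1*(c d) + j2*d + j3 it is 1 iff
   i1 = j1 and i3 = j3. *)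
Definition Sentry (p : pattern) (i j : nat) : bool :=
  (i %/ (pb p * pd p) == j %/ (pc p * pd p))%N && (i %% pd p == j %% pd p)%N.

(* The binary matrix S_pi (used with m = prows p, n = pcols p, or, for the
   right factor of a chainable pair, with m = pcols of the left pattern,
   which equals prows of the right one). *)
Definition Smat (p : pattern) (m n : nat) : 'M[bool]_(m, n) :=
  \matrix_(i < m, j < n) Sentry p i j.

Definition inSigma (p : pattern) (m n : nat) (A : 'M[CC]_(m, n)) : Prop :=
  [/\ m = prows p, n = pcols p &
      forall (i : 'I_m) (j : 'I_n), ~~ Smat p m n i j -> A i j = 0].

Definition chainable (p q : pattern) : Prop :=
  [/\ (pa q %| pa p * pc p)%N, (pd p %| pb q * pd q)%N,
      (pa p * pc p %/ pa q = pb q * pd q %/ pd p)%N,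
      (pa p %| pa q)%N & (pd q %| pd p)%N].

Definition rpair (p q : pattern) : nat := (pa p * pc p %/ pa q)%N.

Definition pstar (p q : pattern) : pattern :=
  Pattern (pa p) (pb p * pd p %/ pd q)%N (pa q * pc q %/ pa p)%N (pd q).

Definition dummy_pattern := Pattern 1 1 1 1.

Definition architecture (beta : seq pattern) : Prop :=
  [/\ size beta != 0%N, all pattern_pos beta &
      forall l, (l.+1 < size beta)%N ->
        pcols (nth dummy_pattern beta l) = prows (nth dummy_pattern beta l.+1)].

Definition chainable_arch (beta : seq pattern) : Prop :=
  architecture beta /\
  forall l, (l.+1 < size beta)%N ->
    chainable (nth dummy_pattern beta l) (nth dummy_pattern beta l.+1).

Definition pstar_seq (s : seq pattern) : pattern :=
  match s with
  | [::] => dummy_pattern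
  | p :: s' => foldl pstar p s'
  end.

Definition beta_l (beta : seq pattern) (l : nat) : seq pattern :=
  [:: pstar_seq (take l beta); pstar_seq (drop l beta)].

Fixpoint inB (beta : seq pattern) (m n : nat) (A : 'M[CC]_(m, n)) {struct beta}
  : Prop :=
  match beta with
  | [::] => False
  | p :: beta' =>
    match beta' with
    | [::] => inSigma p A
    | _ :: _ =>
      exists k (X : 'M[CC]_(m, k)) (Y : 'M[CC]_(k, n)),
        [/\ inSigma p X, inB beta' Y & A = X *m Y]
    end
  end.

Definition Umat m r n (L : 'M[bool]_(m, r)) (R : 'M[bool]_(r, n)) (i : 'I_r)
  : 'M[bool]_(m, n) := \matrix_(x, y) (L x i && R i y).

Definition Upartition m r n (L : 'M[bool]_(m, r)) (R : 'M[bool]_(r, n))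
  : {set {set 'I_r}} :=
  equivalence_partition (fun i j => Umat L R i == Umat L R j) [set: 'I_r].

Definition Urows m r n (L : 'M[bool]_(m, r)) (R : 'M[bool]_(r, n)) (i : 'I_r)
  : {set 'I_m} := [set x | L x i].
Definition Ucols m r n (L : 'M[bool]_(m, r)) (R : 'M[bool]_(r, n)) (i : 'I_r)
  : {set 'I_n} := [set y | R i y].

Definition submx_set (F : fieldType) m n (A : 'M[F]_(m, n))
  (Rs : {set 'I_m}) (Cs : {set 'I_n}) : 'M[F]_(#|Rs|, #|Cs|) :=
  \matrix_(x < #|Rs|, y < #|Cs|) A (enum_val x) (enum_val y).

Definition inM (p q : pattern) (m n : nat) (A : 'M[CC]_(m, n)) : Prop :=
  [/\ m = prows p, n = pcols q, pcols p = prows q &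
      forall P, P \in Upartition (Smat p m (pcols p)) (Smat q (pcols p) n) ->
      forall i, i \in P ->
        (\rank (submx_set A
                  (Urows (Smat p m (pcols p)) (Smat q (pcols p) n) i)
                  (Ucols (Smat p m (pcols p)) (Smat q (pcols p) n) i))
         <= rpair p q)%N].

From mathcomp Require Import all_boot all_algebra.
From mathcomp Require Import complex.
From mathcomp Require Import Rstruct.
From mathcomp Require Import zify.

(* Every chainable pair (p, q) has the form p = (a, b, s r, t d), q = (a s, r t, c, d)
   with r = r(p, q).  Read a middle index i in mixed radix (_, r, t d): column i of S_p
   and row i of S_q only depend on the outer digits of i, and both are nonzero at
   (x, y) only for outer digits determined by x and y.  So the rank-one supports U_i
   are equal or disjoint, every class has r elements, and on a class rectangle X Y is a
   sum of r rank-one matrices.  Conversely, factoring each rectangle block of A through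
   r dimensions gives A = X Y with X supported by S_p and Y the S_q-mask of W A, W
   supported by S_p^T.  This settles L = 2; grouping factors then gives
   B^beta <= B^beta_l.  For the converse, induct on L: factor A through beta_1 as above.
   Each rectangle block of Y is a left multiple of the matching block of A for the
   split of beta one step further, so Y meets the hypotheses for (pi_2, ..., pi_L). *)

Set Implicit Arguments.
Unset Strict Implicit.
Unset Printing Implicit Defensive.

Import GRing.Theory.

Section Masks.

Variable F : fieldType.
Local Open Scope ring_scope.

Definition mxmask m n (P : 'I_m -> 'I_n -> bool) (A : 'M[F]_(m, n)) :=
  \matrix_(x, y) if P x y then A x y else 0.

Definition supported m n (P : 'I_m -> 'I_n -> bool) (A : 'M[F]_(m, n)) :=
  forall x y, ~~ P x y -> A x y = 0.

Definition rect_mask m k n (L : 'I_m -> 'I_k -> bool) (R : 'I_k -> 'I_n -> bool)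
    (i : 'I_k) (A : 'M[F]_(m, n)) :=
  mxmask (fun x y => L x i && R i y) A.

Lemma mxmask_supported m n (P : 'I_m -> 'I_n -> bool) (A : 'M[F]_(m, n)) :
  supported P (mxmask P A).
Proof. by move=> x y; rewrite mxE => /negbTE ->. Qed.

Lemma mulmx_supported m k n (L : 'I_m -> 'I_k -> bool) (R : 'I_k -> 'I_n -> bool)
    (X : 'M[F]_(m, k)) (Y : 'M[F]_(k, n)) :
  supported L X -> supported R Y ->
  supported (fun x y => [exists i, L x i && R i y]) (X *m Y).
Proof.
move=> sX sY x y /existsPn noi; rewrite mxE big1 // => i _.
by case/nandP: (noi i) => [/sX|/sY] ->; rewrite ?mul0r ?mulr0.
Qed.

Lemma rank_mxmask_mulmx_le m k n (T : 'I_m -> 'I_k -> bool) (S : 'I_k -> 'I_n -> bool)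
    (rows : 'I_k -> bool) (rows' : 'I_m -> bool) (cols : 'I_n -> bool)
    (W : 'M[F]_(k, m)) (A : 'M[F]_(m, n)) :
  supported (fun i x => T x i) W ->
  (forall x i, T x i -> rows i -> rows' x) ->
  (forall i y, rows i -> cols y -> S i y) ->
  (\rank (mxmask (fun i y => rows i && cols y) (mxmask S (W *m A)))
     <= \rank (mxmask (fun x y => rows' x && cols y) A))%N.
Proof.
move=> sW Trows rowsS.
suff -> : mxmask (fun i y => rows i && cols y) (mxmask S (W *m A)) =
          mxmask (fun i _ => rows i) W *m mxmask (fun x y => rows' x && cols y) A.
  exact: mxrankM_maxr.
apply/matrixP => i y; rewrite !mxE.
case: (boolP (rows i)) => /= [ri | /negbTE nri]; last first.
  by rewrite big1 // => x _; rewrite !mxE nri mul0r.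
case: (boolP (cols y)) => /= [cy | /negbTE ncy]; last first.
  by rewrite big1 // => x _; rewrite !mxE ncy andbF mulr0.
rewrite rowsS //; apply: eq_bigr => x _; rewrite !mxE ri cy andbT.
by have [Tx | nTx] := boolP (T x i); [rewrite (Trows _ _ Tx ri) | rewrite sW ?mul0r].
Qed.

Lemma mxrank_mxsub m n m' n' (f : 'I_m' -> 'I_m) (g : 'I_n' -> 'I_n)
    (A : 'M[F]_(m, n)) :
  (\rank (mxsub f g A) <= \rank A)%N.
Proof.
have -> : mxsub f g A = rowsub f 1%:M *m (A *m colsub g 1%:M).
  by rewrite mulmx_colsub mulmx1 -mxsub_mul mul1mx.
exact: leq_trans (mxrankM_maxr _ _) (mxrankM_maxl _ _).
Qed.

Lemma sum_enum_val_delta m (S : {set 'I_m}) (x : 'I_m) (G : 'I_m -> F) :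
  \sum_(e < #|S|) (enum_val e == x)%:R * G (enum_val e) =
  if x \in S then G x else 0.
Proof.
rewrite -(big_enum_val (fun x' => (x' == x)%:R * G x')) /=.
under eq_bigr do rewrite mulr_natl mulrb.
rewrite -big_mkcondr /=; case: ifP => Sx; last first.
  by rewrite big_pred0 // => x'; apply/andP => -[Sx' /eqP xx']; rewrite -xx' Sx' in Sx.
by rewrite (big_pred1 x) // => x'; rewrite /= andb_idl // => /eqP ->.
Qed.

Lemma mxrank_submx_set m n (A : 'M[F]_(m, n)) (Rs : {set 'I_m}) (Cs : {set 'I_n}) :
  \rank (submx_set A Rs Cs) = \rank (mxmask (fun x y => (x \in Rs) && (y \in Cs)) A).
Proof.
apply/eqP; rewrite eqn_leq; apply/andP; split.
  have -> : submx_set A Rs Cs = mxsub enum_val enum_val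
                                  (mxmask (fun x y => (x \in Rs) && (y \in Cs)) A).
    by apply/matrixP => e e'; rewrite !mxE !enum_valP.
  exact: mxrank_mxsub.
pose selR : 'M[F]_(m, #|Rs|) := \matrix_(x, e) (enum_val e == x)%:R.
pose selC : 'M[F]_(#|Cs|, n) := \matrix_(e, y) (enum_val e == y)%:R.
suff -> : mxmask (fun x y => (x \in Rs) && (y \in Cs)) A =
          selR *m submx_set A Rs Cs *m selC.
  exact: leq_trans (mxrankM_maxl _ _) (mxrankM_maxr _ _).
apply/matrixP => x y; rewrite !mxE.
under eq_bigr => e' _.
  rewrite mxE; under eq_bigr do rewrite !mxE.
  rewrite (sum_enum_val_delta _ _ (fun x' => A x' (enum_val e'))) mxE mulrC.
  over.
rewrite (sum_enum_val_delta _ _ (fun y' => if x \in Rs then A x y' else 0)).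
by case: (x \in Rs); case: (y \in Cs).
Qed.

Lemma col_ebase_pid_factor m n r (B : 'M[F]_(m, n)) : (\rank B <= r)%N ->
  col_ebase B *m (pid_mx r : 'M_(m, r)) *m
    ((pid_mx r : 'M_(r, m)) *m invmx (col_ebase B) *m B) = B.
Proof.
move=> rkB; have EB := mulmx_ebase B; set L := col_ebase B in EB *.
rewrite -{1}EB !mulmxA -(mulmxA _ (invmx L)) mulVmx ?col_ebase_unit // mulmx1.
rewrite -!(mulmxA L) !mul_pid_mx !minnn (minn_idPr rkB).
by rewrite (minn_idPr (rank_leq_row B)) mulmxA.
Qed.

End Masks.

(* [mv i] enumerates by [lab] the middle indices j whose rank-one support L[:,j] R[j,:]
   is that of i; the last clause says that two of these supports meet only if they
   are equal. *)
Definition block_labelling m k n r (L : 'I_m -> 'I_k -> bool)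
    (R : 'I_k -> 'I_n -> bool) (lab : 'I_k -> 'I_r) (mv : 'I_k -> 'I_r -> 'I_k) :=
  [/\ forall i w x, L x (mv i w) = L x i,
      forall i w y, R (mv i w) y = R i y,
      forall i w, lab (mv i w) = w &
      forall x y i j, L x i -> R i y -> L x j -> R j y -> mv i (lab j) = j].

Section LabelledBlocks.

Variables (F : fieldType) (m k n r : nat).
Variables (L : 'I_m -> 'I_k -> bool) (R : 'I_k -> 'I_n -> bool).
Variables (lab : 'I_k -> 'I_r) (mv : 'I_k -> 'I_r -> 'I_k).
Hypothesis labP : block_labelling L R lab mv.
Local Open Scope ring_scope.

Lemma sum_over_class x y i0 (G : 'I_k -> F) : L x i0 -> R i0 y ->
  (forall i, ~~ (L x i && R i y) -> G i = 0) -> \sum_i G i = \sum_w G (mv i0 w).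
Proof.
case: labP => L_mv R_mv lab_mv mv_lab Lx Ry G0.
rewrite (bigID (fun i => L x i && R i y)) /= [X in _ + X]big1 ?addr0; last first.
  by move=> i /G0.
rewrite (reindex_onto (mv i0) lab) => [|i /andP[]]; last exact: mv_lab.
by apply: eq_bigl => w; rewrite L_mv R_mv Lx Ry lab_mv eqxx.
Qed.

Lemma rank_rect_mask_mulmx (X : 'M[F]_(m, k)) (Y : 'M[F]_(k, n)) i0 :
  supported L X -> supported R Y -> (\rank (rect_mask L R i0 (X *m Y)) <= r)%N.
Proof.
move=> sX sY.
pose X' : 'M[F]_(m, r) := \matrix_(x, w) if L x i0 then X x (mv i0 w) else 0.
pose Y' : 'M[F]_(r, n) := \matrix_(w, y) if R i0 y then Y (mv i0 w) y else 0.
suff -> : rect_mask L R i0 (X *m Y) = X' *m Y'.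
  exact: leq_trans (mxrankM_maxl _ _) (rank_leq_col _).
apply/matrixP => x y; rewrite !mxE.
case: ifP => [/andP[Lx Ry] | /negbT/nandP LRn]; last first.
  by rewrite big1 // => w _; rewrite !mxE; case: LRn => /negbTE->; rewrite ?mul0r ?mulr0.
rewrite (sum_over_class Lx Ry) => [|i /nandP[/sX|/sY] ->]; rewrite ?mul0r ?mulr0 //.
by apply: eq_bigr => w _; rewrite !mxE Lx Ry.
Qed.

Lemma rect_mask_factor (A : 'M[F]_(m, n)) :
  supported (fun x y => [exists i, L x i && R i y]) A ->
  (forall i, \rank (rect_mask L R i A) <= r)%N ->
  exists (X : 'M[F]_(m, k)) (W : 'M[F]_(k, m)),
    [/\ supported L X, supported (fun i x => L x i) W &
        A = X *m mxmask R (W *m A)].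
Proof.
case: labP => L_mv R_mv lab_mv mv_lab sA rkA.
pose B i := rect_mask L R i A.
pose X := mxmask L (\matrix_(x, i) (col_ebase (B i) *m pid_mx r) x (lab i)).
pose W := mxmask (fun i x => L x i)
  (\matrix_(i, x) ((pid_mx r : 'M_(r, m)) *m invmx (col_ebase (B i))) (lab i) x).
exists X, W; split; [exact: mxmask_supported | exact: mxmask_supported | ].
apply/matrixP => x y; rewrite mxE.
have [i0 /andP[Lx Ry] | noi] := pickP (fun i => L x i && R i y); last first.
  rewrite sA; last by apply/existsPn => i; rewrite noi.
  by rewrite big1 // => i _; rewrite !mxE; case/nandP: (negbT (noi i)) => /negbTE->;
    rewrite ?mul0r ?mulr0.
have B_mv w : B (mv i0 w) = B i0.
  by apply/matrixP => x' y'; rewrite !mxE L_mv R_mv.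
rewrite (sum_over_class Lx Ry); last first.
  by move=> i; rewrite !mxE => /nandP[]/negbTE->; rewrite ?mul0r ?mulr0.
have -> : A x y = B i0 x y by rewrite mxE Lx Ry.
have := col_ebase_pid_factor (rkA i0); rewrite -/(B i0) => <-; rewrite mxE.
apply: eq_bigr => w _; rewrite !mxE L_mv R_mv Lx Ry B_mv lab_mv; congr (_ * _).
apply: eq_bigr => x' _; rewrite !mxE L_mv B_mv lab_mv Ry andbT.
by case: (L x' i0); rewrite ?mul0r ?mulr0.
Qed.

End LabelledBlocks.

Section MixedRadix.

Variables e r : nat.

Definition mixed_radix h w l := h * (r * e) + (w * e + l).

Lemma mixed_radix_low_lt w l : w < r -> l < e -> w * e + l < r * e.
Proof. by move=> wr le; nia. Qed.

Lemma mixed_radix_divn h w l : w < r -> l < e -> mixed_radix h w l %/ (r * e) = h.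
Proof.
move=> wr le; have low := mixed_radix_low_lt wr le.
by rewrite /mixed_radix divnMDl ?divn_small ?addn0 //; apply: leq_ltn_trans low.
Qed.

Lemma mixed_radix_modn h w l : l < e -> mixed_radix h w l %% e = l.
Proof. by move=> le; rewrite /mixed_radix mulnA modnMDl modnMDl modn_small. Qed.

Lemma mixed_radix_mid h w l :
  w < r -> l < e -> mixed_radix h w l %% (r * e) %/ e = w.
Proof.
move=> wr le; rewrite /mixed_radix modnMDl modn_small ?mixed_radix_low_lt //.
by rewrite divnMDl ?divn_small ?addn0 //; apply: leq_ltn_trans le.
Qed.

Lemma mixed_radix_lt N h w l :
  w < r -> l < e -> h < N -> mixed_radix h w l < N * (r * e).
Proof.
move=> wr le hN; apply: (@leq_trans (h.+1 * (r * e))).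
  by have := mixed_radix_low_lt wr le; rewrite /mixed_radix mulSn; lia.
by rewrite leq_mul2r hN orbT.
Qed.

Lemma mixed_radixE i : 0 < e ->
  mixed_radix (i %/ (r * e)) (i %% (r * e) %/ e) (i %% e) = i.
Proof.
move=> e0; rewrite /mixed_radix -(modn_dvdm i (dvdn_mull r (dvdnn e))).
by rewrite -divn_eq -divn_eq.
Qed.

Lemma mid_digit_lt i : 0 < e -> 0 < r -> i %% (r * e) %/ e < r.
Proof. by move=> e0 r0; rewrite ltn_divLR // ltn_pmod // muln_gt0 r0. Qed.

End MixedRadix.

(* P has the row block structure (a, b d) of h and the column block structure (a c, d)
   of l; these four numbers determine a positive pattern. *)
Definition spans (P h l : pattern) :=
  [/\ pattern_pos P, pa P = pa h, pd P = pd l,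
      pb P * pd P = pb h * pd h & pa P * pc P = pa l * pc l].

Lemma spans_refl p : pattern_pos p -> spans p p p.
Proof. by []. Qed.

Lemma spans_trans X P Q h z h' l :
  spans X P Q -> spans P h z -> spans Q h' l -> spans X h l.
Proof.
by case=> ? ? ? ? ? [? ? ? ? ?] [? ? ? ? ?]; split => //; congruence.
Qed.

Lemma spans_eq P Q h l : spans P h l -> spans Q h l -> P = Q.
Proof.
case: P Q => a b c d [a' b' c' d'].
case=> /and4P[a0 _ _ d0] /= Ea Ed Eb Ec [_ /= Ea' Ed' Eb' Ec'].
have Ea2 : a' = a by rewrite Ea Ea'.
have Ed2 : d' = d by rewrite Ed Ed'.
rewrite Ea2 Ed2 in Eb' Ec' *.
have -> : b' = b by apply/eqP; rewrite -(eqn_pmul2r d0) Eb Eb'.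
by have -> : c' = c by apply/eqP; rewrite -(eqn_pmul2l a0) Ec Ec'.
Qed.

Lemma spans_dims P h l : spans P h l -> prows P = prows h /\ pcols P = pcols l.
Proof.
by case=> _ Ea Ed Eb Ec; split; [rewrite /prows -!mulnA Eb Ea | rewrite /pcols Ec Ed].
Qed.

Variant chainable_nf_spec : pattern -> pattern -> Prop :=
  ChainableNF a b c d s t r of 0 < a & 0 < b & 0 < c & 0 < d & 0 < s & 0 < t & 0 < r :
    chainable_nf_spec (Pattern a b (s * r) (t * d)) (Pattern (a * s) (r * t) c d).

Lemma chainable_nfP p q :
  pattern_pos p -> pattern_pos q -> chainable p q -> chainable_nf_spec p q.
Proof.
case: p q => a b c d [a' b' c' d']; rewrite /pattern_pos /chainable /=.
move=> /and4P[a0 b0 c0 d0] /and4P[_ _ c0' d0'].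
case=> a'_dvd d_dvd Er /dvdnP[s Ea'] /dvdnP[t Ed]; subst a' d.
set r := a * c %/ (s * a) in Er.
have Ec : c = s * r.
  have := divnK a'_dvd; rewrite -/r => Hc.
  by apply/eqP; rewrite -(eqn_pmul2l a0); apply/eqP; lia.
have Eb' : b' = r * t.
  have := divnK d_dvd; rewrite -Er => Hb.
  by apply/eqP; rewrite -(eqn_pmul2r d0'); apply/eqP; lia.
rewrite Ec Eb' (mulnC s a).
have [s0 r0] : 0 < s /\ 0 < r by move: c0; rewrite Ec muln_gt0 => /andP.
have t0 : 0 < t by move: d0; rewrite muln_gt0 => /andP[].
exact: ChainableNF.
Qed.

Section NormalForm.

Variables a b c d s t r : nat.
Hypotheses (a0 : 0 < a) (b0 : 0 < b) (c0 : 0 < c) (d0 : 0 < d).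
Hypotheses (s0 : 0 < s) (t0 : 0 < t) (r0 : 0 < r).

Local Notation e := (t * d).
Local Notation D := (r * (t * d)).
Local Notation p := (Pattern a b (s * r) (t * d)).
Local Notation q := (Pattern (a * s) (r * t) c d).

Let e0 : 0 < e. Proof. by rewrite muln_gt0 t0. Qed.
Let d_dvd_e : d %| e. Proof. exact: dvdn_mull. Qed.

Lemma nf_Sentry_l x i :
  Sentry p x i = (x %/ (b * e) == i %/ D %/ s) && (x %% e == i %% e).
Proof.
by rewrite /Sentry /= -divnMA (_ : s * r * (t * d) = r * (t * d) * s) //; lia.
Qed.

Lemma nf_Sentry_r i y :
  Sentry q i y = (i %/ D == y %/ (c * d)) && (i %% e %% d == y %% d).
Proof. by rewrite /Sentry /= (modn_dvdm _ d_dvd_e) // mulnA. Qed.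

Lemma nf_pstar : pstar p q = Pattern a (b * t) (s * c) d.
Proof. by rewrite /pstar /= mulnA mulnK // -mulnA mulKn. Qed.

Lemma nf_Sentry_pstar x y :
  Sentry (pstar p q) x y = (x %/ (b * e) == y %/ (c * d) %/ s) && (x %% d == y %% d).
Proof.
by rewrite nf_pstar /Sentry /= -divnMA (_ : s * c * d = c * d * s) ?mulnA //; lia.
Qed.

Lemma nf_rpair : rpair p q = r.
Proof. by rewrite /rpair /= mulnA mulKn // muln_gt0 a0. Qed.

Lemma nf_pcols : pcols p = a * s * D.
Proof. by rewrite /pcols /=; lia. Qed.

Lemma nf_pcols_prows : pcols p = prows q.
Proof. by rewrite nf_pcols /prows /=; lia. Qed.

Lemma nf_pstar_spans : spans (pstar p q) p q.
Proof.
rewrite nf_pstar; split; rewrite /pattern_pos /= ?muln_gt0 ?a0 ?b0 ?c0 ?d0 ?s0 ?t0 //;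
  lia.
Qed.

Lemma nf_Sentry_pstar_mid x i y : Sentry p x i -> Sentry q i y -> Sentry (pstar p q) x y.
Proof.
rewrite nf_Sentry_l nf_Sentry_r nf_Sentry_pstar.
move=> /andP[/eqP -> /eqP xi] /andP[/eqP -> /eqP iy].
by rewrite eqxx -iy -xi (modn_dvdm _ d_dvd_e) eqxx.
Qed.

Lemma nf_Sentry_pstar_witness x y : x < prows p -> y < pcols q ->
  Sentry (pstar p q) x y -> exists2 i, i < pcols p & Sentry p x i && Sentry q i y.
Proof.
move=> xlt ylt; rewrite nf_Sentry_pstar => /andP[/eqP xy /eqP xy'].
have xe : x %% e < e by rewrite ltn_pmod.
have yh : y %/ (c * d) < a * s.
  by rewrite ltn_divLR ?muln_gt0 ?c0 //; move: ylt; rewrite /pcols /=; lia.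
exists (mixed_radix e r (y %/ (c * d)) 0 (x %% e)).
  by rewrite nf_pcols mixed_radix_lt.
rewrite nf_Sentry_l nf_Sentry_r mixed_radix_divn // mixed_radix_modn //.
by rewrite xy !eqxx /= (modn_dvdm _ d_dvd_e) // xy' eqxx.
Qed.

Lemma nf_labelling m n : exists (lab : 'I_(pcols p) -> 'I_r)
    (mv : 'I_(pcols p) -> 'I_r -> 'I_(pcols p)),
  block_labelling (fun (x : 'I_m) (i : 'I_(pcols p)) => Sentry p x i)
                  (fun (i : 'I_(pcols p)) (y : 'I_n) => Sentry q i y) lab mv.
Proof.
have mv_lt i (w : 'I_r) : i < pcols p -> mixed_radix e r (i %/ D) w (i %% e) < pcols p.
  rewrite !nf_pcols => ilt; apply: mixed_radix_lt; rewrite ?ltn_pmod //.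
  by rewrite ltn_divLR // muln_gt0 r0.
exists (fun i => Ordinal (mid_digit_lt i e0 r0)).
exists (fun (i : 'I_(pcols p)) w => Ordinal (mv_lt i w (ltn_ord i))).
split=> [i w x | i w y | i w | x y i j] /=.
- by rewrite !nf_Sentry_l mixed_radix_divn ?mixed_radix_modn ?ltn_pmod.
- by rewrite !nf_Sentry_r mixed_radix_divn ?mixed_radix_modn ?ltn_pmod.
- by apply: val_inj; rewrite /= mixed_radix_mid ?ltn_pmod.
rewrite !nf_Sentry_l !nf_Sentry_r.
move=> /andP[_ /eqP xi] /andP[/eqP iy _] /andP[_ /eqP xj] /andP[/eqP jy _].
by apply: val_inj; rewrite /= -{2}(mixed_radixE r j e0) iy jy -xi -xj.
Qed.

End NormalForm.

Lemma pstar_spans p q :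
  pattern_pos p -> pattern_pos q -> chainable p q -> spans (pstar p q) p q.
Proof. by move=> pp qq /(chainable_nfP pp qq) {pp qq} [] *; apply: nf_pstar_spans. Qed.

Lemma chainable_pcols_prows p q :
  pattern_pos p -> pattern_pos q -> chainable p q -> pcols p = prows q.
Proof. by move=> pp qq /(chainable_nfP pp qq) {pp qq} [] *; apply: nf_pcols_prows. Qed.

Lemma Sentry_pstar p q x i y : pattern_pos p -> pattern_pos q -> chainable p q ->
  Sentry p x i -> Sentry q i y -> Sentry (pstar p q) x y.
Proof.
move=> pp qq /(chainable_nfP pp qq) {pp qq} [] *.
by apply: nf_Sentry_pstar_mid; eassumption.
Qed.

Lemma Sentry_pstar_witness p q x y :
  pattern_pos p -> pattern_pos q -> chainable p q ->
  x < prows p -> y < pcols q -> Sentry (pstar p q) x y ->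
  exists2 i, i < pcols p & Sentry p x i && Sentry q i y.
Proof.
by move=> pp qq /(chainable_nfP pp qq) {pp qq} [] *; apply: nf_Sentry_pstar_witness.
Qed.

Lemma chainable_labelling p q m n :
  pattern_pos p -> pattern_pos q -> chainable p q ->
  exists (lab : 'I_(pcols p) -> 'I_(rpair p q))
         (mv : 'I_(pcols p) -> 'I_(rpair p q) -> 'I_(pcols p)),
  block_labelling (fun (x : 'I_m) (i : 'I_(pcols p)) => Sentry p x i)
                  (fun (i : 'I_(pcols p)) (y : 'I_n) => Sentry q i y) lab mv.
Proof.
move=> pp qq /(chainable_nfP pp qq) {pp qq} [] *.
by rewrite nf_rpair //; apply: nf_labelling.
Qed.

Section PatternPairs.

Local Open Scope ring_scope.

Definition pair_block p q m n (i : nat) (A : 'M[CC]_(m, n)) :=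
  mxmask (fun x y => Sentry p x i && Sentry q i y) A.

(* The rank conditions of M^(p,q), indexed by middle indices instead of classes. *)
Definition block_ranks p q m n (A : 'M[CC]_(m, n)) :=
  [/\ m = prows p, n = pcols q &
      forall i, (i < pcols p)%N -> (\rank (pair_block p q i A) <= rpair p q)%N].

Lemma inSigmaP p m n (A : 'M[CC]_(m, n)) :
  inSigma p A <-> [/\ m = prows p, n = pcols p & supported (fun x y => Sentry p x y) A].
Proof.
by split=> -[Em En sA]; split=> // x y; have := sA x y; rewrite mxE.
Qed.

Variables p q : pattern.
Hypotheses (p_pos : pattern_pos p) (q_pos : pattern_pos q) (pq : chainable p q).

Lemma inSigma_mulmx m k n (X : 'M[CC]_(m, k)) (Y : 'M[CC]_(k, n)) :
  inSigma p X -> inSigma q Y -> inSigma (pstar p q) (X *m Y).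
Proof.
move=> /inSigmaP[Em _ sX] /inSigmaP[_ En sY]; apply/inSigmaP.
have [Erows Ecols] := spans_dims (pstar_spans p_pos q_pos pq).
split; [by rewrite Erows | by rewrite Ecols | ].
move=> x y Sxy; apply: (mulmx_supported sX sY); apply: contra Sxy => /existsP[i /andP[]].
exact: Sentry_pstar.
Qed.

Lemma block_ranks_mulmx m k n (X : 'M[CC]_(m, k)) (Y : 'M[CC]_(k, n)) :
  inSigma p X -> inSigma q Y -> block_ranks p q (X *m Y).
Proof.
move=> /inSigmaP[Em Ek sX] /inSigmaP[_ En sY]; split=> // i ilt.
subst k; have [lab [mv labP]] := chainable_labelling m n p_pos q_pos pq.
exact: (rank_rect_mask_mulmx labP (Ordinal ilt) sX sY).
Qed.

Lemma pair_factor m n (A : 'M[CC]_(m, n)) :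
  inSigma (pstar p q) A -> block_ranks p q A ->
  exists (X : 'M[CC]_(m, pcols p)) (W : 'M[CC]_(pcols p, m)),
    [/\ inSigma p X, supported (fun i x => Sentry p x i) W &
        A = X *m mxmask (fun i y => Sentry q i y) (W *m A)].
Proof.
move=> /inSigmaP[_ _ sA] [Em En rkA].
have [lab [mv labP]] := chainable_labelling m n p_pos q_pos pq.
have [|i|X [W [sX sW EA]]] := rect_mask_factor labP (A := A).
- move=> x y /existsPn noi; apply: sA; apply/negP => /Sentry_pstar_witness.
  case=> //; [by rewrite -Em | by rewrite -En | ] => i ilt /andP[Sxi Siy].
  by move: (noi (Ordinal ilt)); rewrite /= Sxi Siy.
- exact: rkA.
by exists X, W; split=> //; apply/inSigmaP.
Qed.

Lemma inB_pair m n (A : 'M[CC]_(m, n)) :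
  inB [:: p; q] A <-> inSigma (pstar p q) A /\ block_ranks p q A.
Proof.
split=> [[k [X [Y [sX sY ->]]]] | [sA rkA]].
  by split; [apply: inSigma_mulmx | apply: block_ranks_mulmx].
have [X [W [sX _ EA]]] := pair_factor sA rkA; case: rkA => _ En _.
exists (pcols p), X, (mxmask (fun i y => Sentry q i y) (W *m A)); split=> //.
apply/inSigmaP; split; [exact: chainable_pcols_prows | exact: En | ].
exact: mxmask_supported.
Qed.

End PatternPairs.

Lemma Upartition_cover m r n (L : 'M[bool]_(m, r)) (R : 'M[bool]_(r, n)) i :
  exists2 P, P \in Upartition L R & i \in P.
Proof.
have : partition (Upartition L R) [set: 'I_r].
  by apply: equivalence_partitionP => x y z _ _ _; split=> // /eqP ->.
case/and3P => /eqP cov _ _; have iC : i \in cover (Upartition L R) by rewrite cov inE.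
by exists (pblock (Upartition L R) i); [exact: pblock_mem | rewrite mem_pblock].
Qed.

Lemma inM_block_ranks p q m n (A : 'M[CC]_(m, n)) :
  pcols p = prows q -> inM p q A <-> block_ranks p q A.
Proof.
move=> pq_dims; set L := Smat p m (pcols p); set R := Smat q (pcols p) n.
have rank_class (i : 'I_(pcols p)) :
    \rank (submx_set A (Urows L R i) (Ucols L R i)) = \rank (pair_block p q i A).
  rewrite mxrank_submx_set; congr (\rank _).
  by apply/matrixP => x y; rewrite !mxE !inE !mxE.
split=> [[Em En _ rk] | [Em En rk]].
  split=> // i ilt; have [P PU iP] := Upartition_cover L R (Ordinal ilt).
  by rewrite -(rank_class (Ordinal ilt)); apply: rk P PU _ iP.
by split=> // P _ i _; rewrite rank_class; apply: rk.
Qed.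

Definition chainableb p q :=
  [&& pa q %| pa p * pc p, pd p %| pb q * pd q,
      pa p * pc p %/ pa q == pb q * pd q %/ pd p, pa p %| pa q & pd q %| pd p].

Lemma chainableP p q : reflect (chainable p q) (chainableb p q).
Proof. by apply: (iffP and5P) => -[? ? /eqP ? ? ?]. Qed.

Definition chain s := all pattern_pos s && sorted chainableb s.

Lemma chainable_arch_chain beta : chainable_arch beta -> chain beta.
Proof.
case=> -[_ pos _] ch; rewrite /chain pos; case: beta ch {pos} => //= x s ch.
by apply/(pathP dummy_pattern) => l lt; apply/chainableP/ch.
Qed.

Lemma chain_take l s : chain s -> chain (take l s).
Proof.
case/andP=> pos ch; rewrite /chain take_sorted // andbT.
by move: pos; rewrite -{1}(cat_take_drop l s) all_cat => /andP[].
Qed.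

Lemma chain_drop l s : chain s -> chain (drop l s).
Proof.
case/andP=> pos ch; rewrite /chain drop_sorted // andbT.
by move: pos; rewrite -{1}(cat_take_drop l s) all_cat => /andP[].
Qed.

Lemma path_chainable_dvdn x s :
  path chainableb x s -> pa x %| pa (last x s) /\ pd (last x s) %| pd x.
Proof.
elim: s x => [|y s IH] x /=; first by rewrite !dvdnn.
case/andP=> /chainableP[_ _ _ axy dyx] /IH[ays dsy].
by split; [exact: dvdn_trans axy ays | exact: dvdn_trans dsy dyx].
Qed.

Lemma spans_pstar P Q h z h' l :
  spans P h z -> spans Q h' l -> chainable z h' -> pa h %| pa z -> pd l %| pd h' ->
  chainable P Q /\ spans (pstar P Q) h l.
Proof.
move=> sP sQ [c1 c2 c3 c4 c5] ahz dlh.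
have PQ : chainable P Q.
  case: sP sQ => _ aP dP bP cP [_ aQ dQ bQ cQ].
  split; rewrite ?cP ?aQ ?dP ?bQ ?aP ?dQ //.
    exact: dvdn_trans c4.
  exact: dvdn_trans c5.
case: (sP) (sQ) => P_pos _ _ _ _ [Q_pos _ _ _ _].
by split=> //; apply: spans_trans (pstar_spans P_pos Q_pos PQ) sP sQ.
Qed.

Lemma pstar_seq_spans x s : chain (x :: s) -> spans (pstar_seq (x :: s)) x (last x s).
Proof.
elim/last_ind: s => [/andP[/andP[x_pos _] _] | s y IH]; first exact: spans_refl.
case/andP; rewrite -rcons_cons all_rcons => /andP[y_pos pos].
rewrite [sorted _ _]/= rcons_path => /andP[ch zy].
have [_] := spans_pstar (IH (introT andP (conj pos ch))) (spans_refl y_pos)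
  (chainableP _ _ zy) (path_chainable_dvdn ch).1 (dvdnn _).
by rewrite /= foldl_rcons last_rcons.
Qed.

Lemma pstar_seq_split s l : chain s -> 0 < l < size s ->
  [/\ pattern_pos (pstar_seq (take l s)), pattern_pos (pstar_seq (drop l s)),
      chainable (pstar_seq (take l s)) (pstar_seq (drop l s)) &
      pstar (pstar_seq (take l s)) (pstar_seq (drop l s)) = pstar_seq s].
Proof.
case: s => [//|x s] ch; case: l => [//|l] /=; rewrite ltnS => lt.
case Ed: (drop l s) => [|h v]; first by move: lt; rewrite -subn_gt0 -size_drop Ed.
have Es : s = take l s ++ h :: v by rewrite -Ed cat_take_drop.
have chP : chain (x :: take l s) := chain_take l.+1 ch.
have chQ : chain (h :: v) by rewrite -Ed; apply: (chain_drop l.+1 ch).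
have zh : chainableb (last x (take l s)) h.
  by case/andP: ch => _; rewrite [sorted _ _]/= {1}Es cat_path /= => /and3P[].
have [sP sQ] := (pstar_seq_spans chP, pstar_seq_spans chQ).
case/andP: (chP) => _ /path_chainable_dvdn[ax _].
case/andP: (chQ) => _ /path_chainable_dvdn[_ dh].
have [PQ sPQ] := spans_pstar sP sQ (chainableP _ _ zh) ax dh.
have := pstar_seq_spans ch; rewrite {2}Es last_cat /= => sS.
by case: sP sQ => [P_pos _ _ _ _] [Q_pos _ _ _ _]; split=> //; apply: spans_eq sPQ sS.
Qed.

Lemma pstar_seq_cons p s : chain (p :: s) -> 0 < size s ->
  [/\ pattern_pos p, pattern_pos (pstar_seq s), chainable p (pstar_seq s) &
      pstar p (pstar_seq s) = pstar_seq (p :: s)].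
Proof. by case: s => // q s ch _; case: (pstar_seq_split (l := 1) ch isT). Qed.

Section Architectures.

Local Open Scope ring_scope.

Lemma rpair_pstar p P Q : pattern_pos p -> pattern_pos P -> chainable p P ->
  rpair (pstar p P) Q = rpair P Q.
Proof.
move=> p_pos P_pos pP.
by case: (pstar_spans p_pos P_pos pP) => _ _ _ _ E; rewrite /rpair E.
Qed.

Lemma block_ranks_mxmask p P Q m n (W : 'M[CC]_(pcols p, m)) (A : 'M[CC]_(m, n)) :
  pattern_pos p -> pattern_pos P -> pattern_pos Q -> chainable p P -> chainable P Q ->
  supported (fun i x => Sentry p x i) W -> block_ranks (pstar p P) Q A ->
  block_ranks P Q (mxmask (fun i y => Sentry (pstar P Q) i y) (W *m A)).
Proof.
move=> p_pos P_pos Q_pos pP PQ sW [_ En rkA].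
split=> //; first exact: chainable_pcols_prows.
move=> j jlt; have [_ cols] := spans_dims (pstar_spans p_pos P_pos pP).
rewrite -(rpair_pstar Q p_pos P_pos pP); apply: leq_trans (rkA j _); last by rewrite cols.
rewrite /pair_block; apply: (@rank_mxmask_mulmx_le _ _ _ _ _ _ (fun i => Sentry P i j)
  (fun x => Sentry (pstar p P) x j) (fun y => Sentry Q j y) _ _ sW).
  by move=> x i; apply: Sentry_pstar.
by move=> i y; apply: Sentry_pstar.
Qed.

Lemma inB_pstar_seq s m n (A : 'M[CC]_(m, n)) :
  chain s -> inB s A -> inSigma (pstar_seq s) A.
Proof.
elim: s m A => [//|p [|q u] IH] m A ch hB; first exact: hB.
case: hB => k [X [Y [sX hY ->]]].
have [p_pos Q_pos pQ <-] := pstar_seq_cons ch isT.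
exact: (inSigma_mulmx p_pos Q_pos pQ sX (IH _ _ (chain_drop 1 ch) hY)).
Qed.

Lemma inB_cat s1 s2 m n (A : 'M[CC]_(m, n)) : (0 < size s1)%N -> (0 < size s2)%N ->
  inB (s1 ++ s2) A ->
  exists k (X : 'M[CC]_(m, k)) (Y : 'M[CC]_(k, n)), [/\ inB s1 X, inB s2 Y & A = X *m Y].
Proof.
elim: s1 m A => [//|p [|q s1] IH] m A _ s2_gt0 /=.
  by case: s2 s2_gt0 {IH} => [//|r s2] _ [k [X [Y [sX hY ->]]]]; exists k, X, Y.
case=> k [X [Y [sX hY ->]]]; have [k' [Z [W [hZ hW ->]]]] := IH _ Y isT s2_gt0 hY.
by exists k', (X *m Z), W; split; [exists k, X, Z | | rewrite mulmxA].
Qed.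

Lemma inB_beta_l s l m n (A : 'M[CC]_(m, n)) : chain s -> (0 < l < size s)%N ->
  inB s A -> inB (beta_l s l) A.
Proof.
move=> ch /andP[l0 lt]; rewrite -{1}(cat_take_drop l s).
case/inB_cat => [||k [X [Y [hX hY ->]]]]; rewrite ?size_take ?size_drop ?lt ?subn_gt0 //.
exists k, X, Y; split=> //; first exact: inB_pstar_seq (chain_take l ch) hX.
exact: inB_pstar_seq (chain_drop l ch) hY.
Qed.

Lemma inB_of_beta_l s m n (A : 'M[CC]_(m, n)) : chain s -> (1 < size s)%N ->
  (forall l, (0 < l < size s)%N -> inB (beta_l s l) A) -> inB s A.
Proof.
elim: s m A => [//|p [//|q [|q' t]] IH] m A ch _ hyp; first exact: (hyp 1%N).
set t' := q :: q' :: t in IH ch hyp *.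
have [p_pos Q_pos pQ _] := pstar_seq_cons ch isT.
have [sA rkA] := (inB_pair p_pos Q_pos pQ A).1 (hyp 1%N isT).
have [X [W [sX sW ->]]] := pair_factor p_pos Q_pos pQ sA rkA.
exists (pcols p), X, (mxmask (fun i y => Sentry (pstar_seq t') i y) (W *m A)).
split=> //; apply: IH (chain_drop 1 ch) isT _ => l lt.
have ltS : (0 < l.+1 < size (p :: t'))%N by case/andP: lt.
have [Pl_pos Pr_pos PlPr EPlr] := pstar_seq_split (chain_drop 1 ch) lt.
have [|_ _ pPl EpPl] := pstar_seq_cons (s := take l t') (chain_take l.+1 ch).
  by case/andP: lt; rewrite size_take; case: ifP.
have [pPl_pos _ pPlPr _] := pstar_seq_split ch ltS.
apply/(inB_pair Pl_pos Pr_pos PlPr); split.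
  rewrite EPlr; apply/inSigmaP; split; last exact: mxmask_supported.
    exact: chainable_pcols_prows.
  by case/inSigmaP: sA => _ En _; rewrite En (spans_dims (pstar_spans p_pos Q_pos pQ)).2.
rewrite -EPlr; apply: block_ranks_mxmask sW _ => //; rewrite EpPl.
exact: ((inB_pair pPl_pos Pr_pos pPlPr A).1 (hyp _ ltS)).2.
Qed.

End Architectures.

Theorem corollary7p7 (beta : seq pattern) :
  chainable_arch beta -> (2 <= size beta)%N ->
  forall A : 'M[CC]_(prows (head dummy_pattern beta),
                      pcols (last dummy_pattern beta)),
    (inB beta A <->
       (forall l, (1 <= l < size beta)%N -> inB (beta_l beta l) A)) /\
    (inB beta A <->
       (inSigma (pstar_seq beta) A /\
        forall l, (1 <= l < size beta)%N ->
          inM (pstar_seq (take l beta)) (pstar_seq (drop l beta)) A)).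
Proof.
move=> /chainable_arch_chain ch size2 A.
split; first by split=> [hB l lt | hyp]; [exact: inB_beta_l | exact: inB_of_beta_l].
split=> [hB | [sA hM]].
  split=> [|l lt]; first exact: inB_pstar_seq.
  have [P_pos Q_pos PQ _] := pstar_seq_split ch lt.
  apply/(inM_block_ranks _ (chainable_pcols_prows P_pos Q_pos PQ)).
  exact: ((inB_pair P_pos Q_pos PQ A).1 (inB_beta_l ch lt hB)).2.
apply: inB_of_beta_l => // l lt.
have [P_pos Q_pos PQ EPQ] := pstar_seq_split ch lt.
apply/(inB_pair P_pos Q_pos PQ); rewrite EPQ; split=> //.
exact/(inM_block_ranks _ (chainable_pcols_prows P_pos Q_pos PQ))/hM.
Qed.
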